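(* Let $n\ge 2$ and let $U$ be the transition matrix of the Grover walk on the complete graph $K_n$. Then there is a real scalar $t$ such that $U^2=\exp\big(t\,S(\mathrm{LD}(K_n))\big)$.
   Context: For a $k$-regular graph $X$, each edge $\{a,b\}$ is replaced by arcs $(a,b)$ and $(b,a)$. The line digraph $\mathrm{LD}(X)$ has the arcs as vertices, with an arc from $(a,b)$ to $(c,d)$ iff $b=c$; $A(\mathrm{LD}(X))$ is its $01$-adjacency matrix. $R$ is the permutation matrix on arcs mapping $(a,b)$ to $(b,a)$. The transition matrix of the Grover walk is $U=\frac{2}{k}A(\mathrm{LD}(X))-R$ (here $k=n-1$). For a digraph $Z$ with $01$-adjacency matrix $A(Z)$, its skew-adjacency matrix is $S(Z)=A(Z)-A(Z)^T$. *)

From HB Require Import structures.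
From mathcomp Require Import all_boot all_order all_algebra.
From mathcomp Require Import all_classical all_reals all_analysis.
Set Implicit Arguments. Unset Strict Implicit. Unset Printing Implicit Defensive.
Import Order.TTheory GRing.Theory Num.Theory.
Import numFieldNormedType.Exports.
Local Open Scope classical_set_scope.
Local Open Scope ring_scope.

Definition arc (n : nat) := {p : 'I_n * 'I_n | p.1 != p.2}.

(* Number of arcs; matrices on arcs are indexed by 'I_(narcs n) via enum_val. *)
Definition narcs (n : nat) : nat := #|{: arc n}|.

Definition arc_of (n : nat) (i : 'I_(narcs n)) : 'I_n * 'I_n :=
  val (@enum_val (arc n) _ i).

(* 01-adjacency matrix of the line digraph LD(K_n): (a,b) -> (c,d) iff b = c *)
Definition LDadj (R : nzRingType) (n : nat) : 'M[R]_(narcs n) :=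
  \matrix_(i, j) ((arc_of i).2 == (arc_of j).1)%:R.

Definition revmx (R : nzRingType) (n : nat) : 'M[R]_(narcs n) :=
  \matrix_(i, j) (arc_of j == ((arc_of i).2, (arc_of i).1))%:R.

(* Grover walk transition matrix on K_n, with k = n - 1 *)
Definition grover (R : fieldType) (n : nat) : 'M[R]_(narcs n) :=
  (2 / (n.-1)%:R) *: LDadj R n - revmx R n.

Definition skewLD (R : nzRingType) (n : nat) : 'M[R]_(narcs n) :=
  LDadj R n - (LDadj R n)^T.

Definition is_mxexp (R : realType) (m : nat) (M E : 'M[R]_m) : Prop :=
  forall i j,
    (fun N : nat => (\sum_(k < N) (k`!%:R)^-1 *: M ^+ k) i j) @ \oo --> E i j.

From Pilot Require Import Defs.
From HB Require Import structures.
From mathcomp Require Import all_boot all_order all_algebra.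
From mathcomp Require Import all_classical all_reals all_analysis.
From mathcomp Require Import ring lra.
Import Order.TTheory GRing.Theory Num.Theory.
Import numFieldNormedType.Exports.
Local Open Scope classical_set_scope.
Local Open Scope ring_scope.

(* Let H and T be the head and tail incidence matrices of the arcs of K_n
   (arcs x vertices), and k = n - 1.  Then A(LD(K_n)) = H T^T, the skew
   matrix is S = H T^T - T H^T, and everything follows from the Gram
   relations  T^T T = H^T H = k I,  T^T H = J - I  and  H J = T J,  together
   with  R H = T,  R T = H  for the arc-reversal matrix R.  From these
   relations alone we derive, by matrix algebra,
       S^3 = (1 - k^2) S    and    U^2 = 1 - b S + b S^2,  b = 2 / k^2.
   On the analytic side, a matrix with S^3 = -w^2 S has the Rodrigues-type
   exponential  exp((th / w) S) = 1 + (sin th / w) S + ((1 - cos th) / w^2) S^2,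
   and a matrix with S^3 = 0 has exp(t S) = 1 + t S + t^2/2 S^2.  For n = 2
   (k = 1) the second case applies with t = -2; for n >= 3 we take
   w = sqrt (k^2 - 1) and an angle th with cos th = 1 - b w^2 and
   sin th = - b w, which lies on the unit circle precisely because b k^2 = 2. *)

Section IncidenceAlgebra.
Context {R : comNzRingType} {m v : nat} {k : R} {H T : 'M[R]_(m, v)}.
Local Notation J := (const_mx 1 : 'M[R]_v).
Hypothesis gramT : T^T *m T = k%:M.
Hypothesis gramH : H^T *m H = k%:M.
Hypothesis crossTH : T^T *m H = J - 1%:M.
Hypothesis balJ : H *m J = T *m J.

Local Notation X := (H *m T^T).
Local Notation Y := (T *m H^T).
Local Notation P := (H *m H^T).
Local Notation Q := (T *m T^T).
Local Notation W := (H *m J *m T^T).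
Local Notation S := (X - Y).

Lemma crossHT : H^T *m T = J - 1%:M.
Proof.
by rewrite -[H^T *m T]trmxK trmx_mul trmxK crossTH linearB /= trmx_const trmx1.
Qed.

Lemma trmxW : W^T = W.
Proof. by rewrite balJ !trmx_mul trmxK trmx_const mulmxA. Qed.

Lemma W_HJH : H *m J *m H^T = W.
Proof. by rewrite [in LHS]balJ -[in RHS]trmxW !trmx_mul trmxK trmx_const mulmxA. Qed.

Lemma W_TJH : T *m J *m H^T = W.
Proof. by rewrite -balJ W_HJH. Qed.

Lemma W_TJT : T *m J *m T^T = W.
Proof. by rewrite -balJ. Qed.

Lemma JTtH : J *m T^T *m H = k *: J.
Proof.
have JJ : (J - 1%:M) *m J = k *: J.
  by rewrite -crossTH -mulmxA balJ mulmxA gramT mul_scalar_mx.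
by rewrite -mulmxA crossTH mulmxBr mulmx1 -JJ mulmxBl mul1mx.
Qed.

(* Right multiplication by S maps the span of W, X, Y, P, Q into itself. *)
Lemma mulXS : X *m S = W - X - k *: P.
Proof.
rewrite mulmxBr !mulmxA -[H *m _ *m H](mulmxA H) crossTH.
rewrite -[H *m _ *m T](mulmxA H) gramT.
by rewrite mulmxBr mulmx1 mulmxBl mul_mx_scalar -scalemxAl.
Qed.

Lemma mulYS : Y *m S = k *: Q - W + Y.
Proof.
rewrite mulmxBr !mulmxA -[T *m _ *m H](mulmxA T) gramH.
rewrite -[T *m _ *m T](mulmxA T) crossHT.
rewrite mulmxBr mulmx1 mulmxBl mul_mx_scalar -scalemxAl W_TJH.
by rewrite opprD opprK addrA.
Qed.

Lemma mulPS : P *m S = k *: X - W + P.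
Proof.
rewrite mulmxBr !mulmxA -[H *m _ *m H](mulmxA H) gramH.
rewrite -[H *m _ *m T](mulmxA H) crossHT.
rewrite mulmxBr mulmx1 mulmxBl mul_mx_scalar -scalemxAl W_HJH.
by rewrite opprD opprK addrA.
Qed.

Lemma mulQS : Q *m S = W - Q - k *: Y.
Proof.
rewrite mulmxBr !mulmxA -[T *m _ *m H](mulmxA T) crossTH.
rewrite -[T *m _ *m T](mulmxA T) gramT.
by rewrite mulmxBr mulmx1 mulmxBl mul_mx_scalar -scalemxAl W_TJT.
Qed.

Lemma mulWS : W *m S = 0.
Proof.
rewrite mulmxBr.
have -> : W *m X = H *m (J *m T^T *m H) *m T^T by rewrite !mulmxA.
have -> : W *m Y = H *m (J *m (T^T *m T)) *m H^T by rewrite !mulmxA.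
rewrite JTtH gramT mul_mx_scalar -!scalemxAr -!scalemxAl.
by rewrite W_HJH subrr.
Qed.

Lemma sqr_skew : S *m S = W *+ 2 - X - Y - k *: (P + Q).
Proof.
rewrite [in LHS]mulmxBl mulXS mulYS.
by apply/matrixP => i j; rewrite !mxE; ring.
Qed.

Lemma cube_skew : S *m (S *m S) = (1 - k ^+ 2) *: S.
Proof.
rewrite mulmxA sqr_skew mulr2n !(mulmxBl, mulmxDl) -scalemxAl mulmxDl.
rewrite mulWS mulXS mulYS mulPS mulQS.
by apply/matrixP => i j; rewrite !mxE; ring.
Qed.
End IncidenceAlgebra.

Section GroverSquare.
Context {F : fieldType} {m v : nat} {k : F} {H T : 'M[F]_(m, v)} {Rv : 'M[F]_m}.
Local Notation J := (const_mx 1 : 'M[F]_v).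
Hypothesis gramT : T^T *m T = k%:M.
Hypothesis gramH : H^T *m H = k%:M.
Hypothesis crossTH : T^T *m H = J - 1%:M.
Hypothesis balJ : H *m J = T *m J.
Hypothesis revH : Rv *m H = T.
Hypothesis revT : Rv *m T = H.
Hypothesis revR : Rv *m Rv = 1%:M.
Hypothesis revsym : Rv^T = Rv.
Hypothesis k_neq0 : k != 0.

Local Notation X := (H *m T^T).
Local Notation S := (X - T *m H^T).

Lemma sqr_grover :
  ((2 / k) *: X - Rv) *m ((2 / k) *: X - Rv) =
  1%:M - (2 / k ^+ 2) *: S + (2 / k ^+ 2) *: (S *m S).
Proof.
have XX : X *m X = H *m J *m T^T - X.
  by rewrite mulmxA -(mulmxA H) crossTH mulmxBr mulmx1 mulmxBl.
have XR : X *m Rv = H *m H^T.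
  by rewrite -mulmxA -[in T^T *m Rv]revsym -trmx_mul revT.
have RX : Rv *m X = T *m T^T by rewrite mulmxA revH.
rewrite (sqr_skew gramT gramH crossTH balJ).
rewrite !(mulmxBl, mulmxBr) -!scalemxAl -!scalemxAr XX XR RX revR.
by apply/matrixP => i j; rewrite !mxE; field.
Qed.
End GroverSquare.

Lemma sum_delta (R : nzSemiRingType) (I : finType) (u : I) (f : I -> R) :
  \sum_x (u == x)%:R * f x = f u.
Proof.
rewrite (bigD1 u) //= eqxx mul1r big1 ?addr0 // => x.
by rewrite eq_sym => /negbTE ->; rewrite mul0r.
Qed.

Lemma sum_neq (R : nzSemiRingType) n (u : 'I_n) : \sum_x (u != x)%:R = (n.-1)%:R :> R.
Proof.
rewrite (bigD1 u) //= eqxx add0r.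
rewrite (eq_bigr (fun _ => 1)); last by move=> x; rewrite eq_sym => ->.
by rewrite sumr_const cardC1 card_ord.
Qed.

Lemma arc_of_inj n : injective (@arc_of n).
Proof. by move=> i j /val_inj /enum_val_inj. Qed.

Lemma sum_arcs (R : nzSemiRingType) n (G : 'I_n -> 'I_n -> R) :
  \sum_(i < narcs n) G (arc_of i).1 (arc_of i).2 =
  \sum_p \sum_q (p != q)%:R * G p q.
Proof.
have -> : \sum_(i < narcs n) G (arc_of i).1 (arc_of i).2 =
          \sum_(pq : 'I_n * 'I_n | pq.1 != pq.2) G pq.1 pq.2.
  rewrite /arc_of /narcs.
  rewrite -(big_enum_val (fun a : Defs.arc n => G (val a).1 (val a).2)).
  rewrite (reindex_omap (val : Defs.arc n -> _) insub); last first.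
    by move=> p Hp; rewrite insubT.
  by apply: eq_bigl => -[p Hp] /=; rewrite insubT /= eqxx Hp.
rewrite pair_bigA big_mkcond /=; apply: eq_bigr => -[p q] _ /=.
by case: (p != q); rewrite ?mul1r ?mul0r.
Qed.

Definition head_mx (R : nzRingType) n : 'M[R]_(narcs n, n) :=
  \matrix_(i, x) ((arc_of i).2 == x)%:R.
Definition tail_mx (R : nzRingType) n : 'M[R]_(narcs n, n) :=
  \matrix_(i, x) ((arc_of i).1 == x)%:R.

Section CompleteGraph.
Variables (R : comNzRingType) (n : nat).
Local Notation H := (head_mx R n).
Local Notation T := (tail_mx R n).
Local Notation k := ((n.-1)%:R : R).

Lemma LDadj_incidence : LDadj R n = H *m T^T.
Proof.
apply/matrixP => i j; rewrite !mxE.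
under eq_bigr do rewrite !mxE.
by rewrite sum_delta eq_sym.
Qed.

Lemma skewLD_incidence : skewLD R n = H *m T^T - T *m H^T.
Proof. by rewrite /skewLD LDadj_incidence trmx_mul trmxK. Qed.

(* Every vertex is the tail of exactly k arcs. *)
Lemma gram_tail : T^T *m T = k%:M.
Proof.
apply/matrixP => x y; rewrite !mxE.
under eq_bigr do rewrite !mxE.
rewrite (sum_arcs _ _ (fun p q => (p == x)%:R * (p == y)%:R)).
under eq_bigr do rewrite -mulr_suml sum_neq eq_sym.
by rewrite -mulr_sumr sum_delta mulr_natr.
Qed.

(* Every vertex is the head of exactly k arcs. *)
Lemma gram_head : H^T *m H = k%:M.
Proof.
apply/matrixP => x y; rewrite !mxE.
under eq_bigr do rewrite !mxE.
rewrite (sum_arcs _ _ (fun p q => (q == x)%:R * (q == y)%:R)) exchange_big /=.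
under eq_bigr do under eq_bigr do rewrite eq_sym.
under eq_bigr do rewrite -mulr_suml sum_neq eq_sym.
by rewrite -mulr_sumr sum_delta mulr_natr.
Qed.

(* There is exactly one arc x -> y for x != y, and none for x = y. *)
Lemma cross_tail_head : T^T *m H = const_mx 1 - 1%:M.
Proof.
apply/matrixP => x y; rewrite !mxE.
under eq_bigr do rewrite !mxE.
rewrite (sum_arcs _ _ (fun p q => (p == x)%:R * (q == y)%:R)).
under eq_bigr do under eq_bigr do rewrite mulrCA eq_sym.
under eq_bigr do rewrite -mulr_sumr.
rewrite sum_delta.
under eq_bigr do rewrite mulrC eq_sym.
by rewrite sum_delta; case: (x == y); rewrite ?subrr ?subr0.
Qed.

(* Every arc has exactly one head and one tail. *)
Lemma balanced_incidence : H *m const_mx 1 = T *m (const_mx 1 : 'M[R]_n).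
Proof.
have ones (f : 'I_(narcs n) -> 'I_n) :
    \matrix_(i, x) (f i == x)%:R *m (const_mx 1 : 'M[R]_n) = const_mx 1.
  apply/matrixP => i x; rewrite !mxE.
  under eq_bigr do rewrite !mxE.
  exact: sum_delta.
by rewrite !ones.
Qed.
End CompleteGraph.

Lemma swap_arcP {n} (a : Defs.arc n) : (val a).2 != (val a).1.
Proof. by rewrite eq_sym; exact: valP a. Qed.

Definition swap_arc {n} (a : Defs.arc n) : Defs.arc n :=
  exist _ ((val a).2, (val a).1) (swap_arcP a).

Definition rev_arc {n} (i : 'I_(narcs n)) : 'I_(narcs n) :=
  enum_rank (swap_arc (enum_val i)).

Lemma arc_of_rev {n} (i : 'I_(narcs n)) :
  arc_of (rev_arc i) = ((arc_of i).2, (arc_of i).1).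
Proof. by rewrite /arc_of /rev_arc enum_rankK. Qed.

Lemma rev_arcK n : involutive (@rev_arc n).
Proof. by move=> i; apply: arc_of_inj; rewrite !arc_of_rev; case: (arc_of i). Qed.

Section Reversal.
Variables (R : comNzRingType) (n : nat).
Local Notation Rv := (revmx R n).

Lemma revmxE : Rv = \matrix_(i, j) (rev_arc i == j)%:R.
Proof.
by apply/matrixP => i j; rewrite !mxE -arc_of_rev (inj_eq (@arc_of_inj n)) eq_sym.
Qed.

Lemma mul_revmx p (M : 'M[R]_(narcs n, p)) : Rv *m M = \matrix_(i, x) M (rev_arc i) x.
Proof.
apply/matrixP => i x; rewrite revmxE !mxE.
under eq_bigr do rewrite mxE.
exact: sum_delta.
Qed.

Lemma rev_head : Rv *m head_mx R n = tail_mx R n.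
Proof. by rewrite mul_revmx; apply/matrixP => i x; rewrite !mxE arc_of_rev. Qed.

Lemma rev_tail : Rv *m tail_mx R n = head_mx R n.
Proof. by rewrite mul_revmx; apply/matrixP => i x; rewrite !mxE arc_of_rev. Qed.

Lemma rev_involutive : Rv *m Rv = 1%:M.
Proof. by rewrite mul_revmx; apply/matrixP => i j; rewrite revmxE !mxE rev_arcK. Qed.

Lemma rev_symmetric : Rv^T = Rv.
Proof.
apply/matrixP => i j; rewrite revmxE !mxE eq_sym.
by rewrite -{1}(rev_arcK n i) (inj_eq (can_inj (@rev_arcK n))).
Qed.
End Reversal.

Lemma skewLD_cube (R : comNzRingType) n :
  skewLD R n ^+ 3 = (1 - (n.-1)%:R ^+ 2) *: skewLD R n.
Proof.
rewrite exprS expr2 -!mulmxE skewLD_incidence.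
exact: (cube_skew (gram_tail R n) (gram_head R n) (cross_tail_head R n)
                  (balanced_incidence R n)).
Qed.

Lemma grover_sqr (F : fieldType) n : (n.-1)%:R != 0 :> F ->
  grover F n ^+ 2 =
  1 - (2 / (n.-1)%:R ^+ 2) *: skewLD F n + (2 / (n.-1)%:R ^+ 2) *: skewLD F n ^+ 2.
Proof.
move=> k_neq0; rewrite !expr2 -!mulmxE /grover LDadj_incidence skewLD_incidence.
exact: (sqr_grover (gram_tail F n) (gram_head F n) (cross_tail_head F n)
          (balanced_incidence F n) (rev_head F n) (rev_tail F n)
          (rev_involutive F n) (rev_symmetric F n) k_neq0).
Qed.

(* Scalar multiples and powers of square matrices of arbitrary size (which
   are not covered by the algebra lemmas, since 'M_N is an algebra only for
   N of the form N'.+1). *)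
Section MatrixPowers.
Variables (R : comNzRingType) (N : nat).
Implicit Types (S : 'M[R]_N) (c : R).

Lemma exprZmx S c k : (c *: S) ^+ k = c ^+ k *: S ^+ k.
Proof.
elim: k => [|k IH]; first by rewrite !expr0 scale1r.
by rewrite !exprS IH -!mulmxE -scalemxAl -scalemxAr scalerA.
Qed.

Lemma expr_cubic S c : S ^+ 3 = c *: S -> forall m,
  S ^+ m.*2.+1 = c ^+ m *: S /\ S ^+ m.*2.+2 = c ^+ m *: S ^+ 2.
Proof.
move=> S3; elim => [|m [IHodd IHeven]]; first by rewrite !expr0 !scale1r.
have scalA c' (A B : 'M[R]_N) : A * (c' *: B) = c' *: (A * B).
  by rewrite -!mulmxE scalemxAr.
have scalAl c' (A B : 'M[R]_N) : (c' *: A) * B = c' *: (A * B).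
  by rewrite -!mulmxE scalemxAl.
have -> : (m.+1).*2.+1 = (2 + m.*2.+1)%N by rewrite doubleS.
have -> : (m.+1).*2.+2 = (m.*2.+2 + 2)%N by rewrite doubleS addn2.
rewrite !exprD IHodd IHeven scalA scalAl; split.
  by rewrite -exprSr S3 scalerA -exprSr.
by rewrite -exprD -[(2 + 2)%N]/(1 + 3)%N exprD expr1 S3 scalA scalerA -expr2 -exprSr.
Qed.
End MatrixPowers.

Section SeriesTools.
Variable R : realType.

Lemma cvg_series_delta (j : nat) : series (fun k : nat => (k == j)%:R : R) @ \oo --> (1 : R).
Proof.
apply: cvg_near_cst; near=> K.
have hjK : (j < K)%N by near: K; exact: nbhs_infty_gt.
rewrite /series /= big_mkord (bigD1 (Ordinal hjK)) //= eqxx big1 ?addr0 // => k hk.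
rewrite (_ : (k == j :> nat) = false) //.
by apply: contraNF hk => /eqP hkj; apply/eqP/val_inj.
Unshelve. all: by end_near.
Qed.

Lemma cvg_series_cos (x : R) : series (cos_coeff x) @ \oo --> cos x.
Proof. by rewrite unlock; exact: is_cvg_series_cos_coeff. Qed.

Lemma cvg_series_sin (x : R) : series (sin_coeff x) @ \oo --> sin x.
Proof. by rewrite unlock; exact: is_cvg_series_sin_coeff. Qed.

Lemma mxexp_of_terms {N} {M A B C : 'M[R]_N} {a b c : R^nat} {al be ga : R} :
  (forall k, (k`!%:R)^-1 *: M ^+ k = a k *: A + b k *: B + c k *: C) ->
  series a @ \oo --> al -> series b @ \oo --> be -> series c @ \oo --> ga ->
  is_mxexp M (al *: A + be *: B + ga *: C).
Proof.
move=> term ha hb hc i j.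
have partial K : (\sum_(k < K) (k`!%:R)^-1 *: M ^+ k) i j =
    series a K * A i j + series b K * B i j + series c K * C i j.
  under eq_bigr do rewrite term.
  rewrite !big_split -!scaler_suml.
  by rewrite /series /= !big_mkord !mxE.
rewrite (eq_cvg _ _ partial) !mxE.
by apply: cvgD; [apply: cvgD|]; apply: cvgMl.
Qed.
End SeriesTools.

Section CubicExponentials.
Variables (R : realType) (N : nat).
Implicit Type S : 'M[R]_N.

Lemma rodrigues_term S th k : S ^+ 3 = - S ->
  (k`!%:R)^-1 *: (th *: S) ^+ k =
  (k == 0)%:R *: (1 + S ^+ 2) + cos_coeff th k *: (- S ^+ 2) + sin_coeff th k *: S.
Proof.
rewrite -scaleN1r => /expr_cubic powS; rewrite exprZmx scalerA.
case: k => [|k].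
  have -> : cos_coeff th 0 = 1 by rewrite /cos_coeff /= expr0 !mul1r invr1.
  have -> : sin_coeff th 0 = 0 by rewrite /sin_coeff /= !mul0r.
  by rewrite /= !expr0 invr1 mul1r !scale1r scale0r addr0 addrK.
rewrite -[k]odd_double_half; case: (odd k); rewrite /= ?add1n ?add0n; set m := k./2.
- have [_ ->] := powS m.
  have -> : sin_coeff th m.*2.+2 = 0 by exact: (sin_coeff_even (m.+1)).
  have -> : cos_coeff th m.*2.+2 = cos_coeff' th m.+1 by rewrite cos_coeff'E.
  rewrite mulr0n !scale0r addr0 add0r scalerN -scaleNr scalerA; congr (_ *: _).
  by rewrite /cos_coeff' -exprnP doubleS [(-1) ^+ m.+1]exprS; ring.
- have [-> _] := powS m.
  rewrite mulr0n cos_coeff_odd -sin_coeff'E /sin_coeff' !scale0r !add0r scalerA.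
  by rewrite -exprnP; congr (_ *: _); ring.
Qed.

Lemma mxexp_rodrigues S th : S ^+ 3 = - S ->
  is_mxexp (th *: S) (1 + sin th *: S + (1 - cos th) *: S ^+ 2).
Proof.
move=> S3.
have := mxexp_of_terms R (fun k => rodrigues_term S th k S3) (cvg_series_delta R 0)
  (cvg_series_cos R th) (cvg_series_sin R th).
by congr is_mxexp; apply/matrixP => i j; rewrite !mxE; ring.
Qed.

Lemma mxexp_cubic S (w th : R) : w != 0 -> S ^+ 3 = - (w ^+ 2 *: S) ->
  is_mxexp ((th / w) *: S)
    (1 + (sin th / w) *: S + ((1 - cos th) / w ^+ 2) *: S ^+ 2).
Proof.
move=> w0 S3.
have S'3 : (w^-1 *: S) ^+ 3 = - (w^-1 *: S).
  rewrite exprZmx S3 scalerN scalerA; congr (- (_ *: S)).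
  by field.
have := mxexp_rodrigues (w^-1 *: S) th S'3.
by rewrite exprZmx !scalerA exprVn.
Qed.

Lemma mxexp_nilpotent S (t : R) : S ^+ 3 = 0 ->
  is_mxexp (t *: S) (1 + t *: S + (t ^+ 2 / 2) *: S ^+ 2).
Proof.
move=> S3.
have term k : (k`!%:R)^-1 *: (t *: S) ^+ k = (k == 0)%:R *: (1 : 'M[R]_N) +
    (k == 1)%:R *: (t *: S) + (k == 2)%:R *: ((t ^+ 2 / 2) *: S ^+ 2).
  rewrite exprZmx [LHS]scalerA.
  case: k => [|[|[|k]]] /=; rewrite ?mulr1n ?mulr0n ?scale0r ?addr0 ?add0r ?scale1r.
  - by rewrite !expr0 invr1 mulr1 scale1r.
  - by rewrite !expr1 invr1 mul1r.
  - by rewrite (_ : 2`!%:R = 2 :> R) // mulrC.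
  - have -> : S ^+ k.+3 = 0 by rewrite -addn3 exprD S3 mulr0.
    by rewrite scaler0.
have := mxexp_of_terms R term (cvg_series_delta R 0) (cvg_series_delta R 1)
  (cvg_series_delta R 2).
by rewrite !scale1r.
Qed.
End CubicExponentials.

Lemma lower_circle_angle (R : realType) (x y : R) :
  x ^+ 2 + y ^+ 2 = 1 -> y <= 0 -> exists th : R, cos th = x /\ sin th = y.
Proof.
move=> circ y_le0.
have x_bnd : -1 <= x <= 1 by apply/andP; split; nra.
exists (- acos x); rewrite cosN sinN acosK ?sin_acos ?in_itv //=.
have -> : 1 - x ^+ 2 = y ^+ 2 by rewrite -circ addrC addKr.
by rewrite sqrtr_sqr ler0_norm ?opprK.
Qed.

Theorem corollary6p2 (R : realType) (n : nat) (hn : (2 <= n)%N) :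
  exists t : R, is_mxexp (t *: skewLD R n) (grover R n ^+ 2).
Proof.
set k : R := (n.-1)%:R; set b := 2 / k ^+ 2; set S := skewLD R n.
have k_ge1 : 1 <= k by rewrite ler1n; case: n hn {k b S} => [|[|]].
have k_neq0 : k != 0 by rewrite gt_eqF // (lt_le_trans ltr01 k_ge1).
have U2 : grover R n ^+ 2 = 1 - b *: S + b *: S ^+ 2 by exact: grover_sqr.
have S3 : S ^+ 3 = (1 - k ^+ 2) *: S by exact: skewLD_cube.
have [k1 | k_gt1] : k = 1 \/ 1 < k by move: k_ge1; rewrite le_eqVlt => /orP[/eqP|]; auto.
- exists (-2); rewrite U2.
  have -> : 1 - b *: S + b *: S ^+ 2 = 1 + (-2) *: S + ((-2) ^+ 2 / 2) *: S ^+ 2.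
    by rewrite /b k1; apply/matrixP => i j; rewrite !mxE; field.
  by apply: mxexp_nilpotent; rewrite S3 k1 expr1n subrr scale0r.
- set c := k ^+ 2 - 1; set w := Num.sqrt c.
  have c_gt0 : 0 < c by rewrite subr_gt0 exprn_egt1.
  have w_neq0 : w != 0 by rewrite gt_eqF // sqrtr_gt0.
  have w2 : w ^+ 2 = c by rewrite sqr_sqrtr // ltW.
  have [th [cos_th sin_th]] : exists th : R, cos th = 1 - b * c /\ sin th = - (b * w).
    apply: lower_circle_angle.
      by rewrite sqrrN exprMn w2 /b /c; field.
    by rewrite oppr_le0 mulr_ge0 ?sqrtr_ge0 // divr_ge0 ?sqr_ge0.
  exists (th / w); rewrite U2.
  have -> : 1 - b *: S + b *: S ^+ 2 =
            1 + (sin th / w) *: S + ((1 - cos th) / w ^+ 2) *: S ^+ 2.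
    rewrite cos_th sin_th w2; apply/matrixP => i j; rewrite !mxE; field.
    by rewrite w_neq0 gt_eqF.
  by apply: mxexp_cubic; rewrite // S3 w2 /c -[RHS]scaleNr opprB.
Qed.
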